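(* The $(3,3)$ Padé approximant of the exponential, \[ \psi_{36}(z)=\frac{1+\frac z2+\frac{z^2}{10}+\frac{z^3}{120}}{1-\frac z2+\frac{z^2}{10}-\frac{z^3}{120}}, \] which is the unique element of $\Pi_{3/3,6}$ (normalized so that numerator and denominator take the value $1$ at $0$), satisfies \[ R(\psi_{36})=-2+\sqrt[3]{4}\left(\sqrt[3]{3-\sqrt5}+\sqrt[3]{3+\sqrt5}\right)\approx 2.207606, \] i.e. the unique real root of $x^3+6x^2-40=0$. Hence $R_{3/3,6}$ equals this number.
   Context: A real rational function $\psi$ is always considered in lowest terms, as a smooth function on $\mathbb{R}$ minus its finitely many poles. It is absolutely monotonic at $x\in\mathbb{R}$ if $x$ is not a pole and $\psi^{(k)}(x)\ge 0$ for all integers $k\ge 0$. The radius of absolute monotonicity is $R(\psi)=\sup\big(\{r\in[0,\infty): \psi \text{ is absolutely monotonic at each point of } [-r,0]\}\cup\{0\}\big)\in[0,+\infty]$. For $m,n,p\in\mathbb{N}$, $\Pi_{m/n,p}$ denotes the set of rational functions $\psi=P/Q$ with $P,Q$ real polynomials, $\deg P\le m$, $Q\not\equiv 0$, $\deg Q\le n$, such that $\psi(z)-e^z=O(z^{p+1})$ as $z\to 0$. Finally, $R_{m/n,p}=\sup\{R(\psi):\psi\in\Pi_{m/n,p}\}$. *)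

From Stdlib Require Import Reals Lra List.
Import ListNotations.
Open Scope R_scope.

(* A real polynomial is its list of coefficients, lowest degree first:
   [a0; a1; ...; ak] represents a0 + a1 x + ... + ak x^k.  *)
Fixpoint peval (P : list R) (x : R) : R :=
  match P with
  | [] => 0
  | a :: P' => a + x * peval P' x
  end.

(* deg P <= m  (the zero polynomial has every degree bound). *)
Definition deg_le (P : list R) (m : nat) : Prop := (length P <= S m)%nat.

Definition coprime_poly (P Q : list R) : Prop :=
  exists A B : list R, forall x, peval A x * peval P x + peval B x * peval Q x = 1.

Definition lowest_terms (P Q P0 Q0 : list R) : Prop :=
  coprime_poly P0 Q0 /\ (exists x, peval Q0 x <> 0) /\
  forall x, peval P0 x * peval Q x = peval P x * peval Q0 x.

Definition deriv_seq (f : R -> R) (U : R -> Prop) (D : nat -> R -> R) : Prop :=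
  (forall x, U x -> D O x = f x) /\
  (forall k x, U x -> derivable_pt_lim (D k) x (D (S k) x)).

Definition abs_monotonic_at (P Q : list R) (x : R) : Prop :=
  exists P0 Q0, lowest_terms P Q P0 Q0 /\ peval Q0 x <> 0 /\
    exists D, deriv_seq (fun y => peval P0 y / peval Q0 y) (fun y => peval Q0 y <> 0) D /\
      forall k, 0 <= D k x.

Inductive ereal : Type := Fin (r : R) | PInf.

Definition ele (a b : ereal) : Prop :=
  match a, b with
  | _, PInf => True
  | PInf, Fin _ => False
  | Fin x, Fin y => x <= y
  end.

Definition is_esup (S : ereal -> Prop) (s : ereal) : Prop :=
  (forall a, S a -> ele a s) /\ (forall b, (forall a, S a -> ele a b) -> ele s b).

Definition am_radius_set (P Q : list R) (a : ereal) : Prop :=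
  a = Fin 0 \/
  exists r, a = Fin r /\ 0 <= r /\ forall x, -r <= x <= 0 -> abs_monotonic_at P Q x.

Definition am_radius (P Q : list R) (s : ereal) : Prop := is_esup (am_radius_set P Q) s.

Definition in_Pi (m n p : nat) (P Q : list R) : Prop :=
  deg_le P m /\ deg_le Q n /\ (exists x, peval Q x <> 0) /\
  exists C delta, 0 < delta /\
    forall z, Rabs z < delta -> peval Q z <> 0 ->
      Rabs (peval P z / peval Q z - exp z) <= C * Rabs z ^ (S p).

Definition R_mnp (m n p : nat) (s : ereal) : Prop :=
  is_esup (fun a => exists P Q, in_Pi m n p P Q /\ am_radius P Q a) s.

Definition P36 : list R := [1; 1/2; 1/10; 1/120].
Definition Q36 : list R := [1; -1/2; 1/10; -1/120].

Definition r36 : R :=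
  -2 + Rpower 4 (1/3) * (Rpower (3 - sqrt 5) (1/3) + Rpower (3 + sqrt 5) (1/3)).

(* Q36 has a real zero rho = 4 + 4/(r36 + 4) and complex zeros sigma, conj sigma,
   and by partial fractions psi36(x) = -1 + resA/(rho - x) + 2 Re(gamma/(sigma - x)).
   So the k-th derivative is k! (resA/(rho - x)^(k+1) + 2 Re(gamma w^(k+1))), minus 1
   at k = 0, where w = 1/(sigma - x).  The identity
     |sigma - x|^2 - (rho - x)^2 = 12 (x + r36)/(r36 + 4)
   says the real pole is the nearest one exactly when x >= -r36.  There, since
   resA > 2 |gamma|, all derivatives are nonnegative.  For x < -r36 the complex term
   dominates, and as gamma w^n turns by a fixed nonreal angle its real part is
   very negative in every long enough window of exponents (a quantitative lemma on
   plane rotations), so some derivative is negative.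
   Separately, Taylor's theorem gives psi36 - exp = O(z^7), and for P/Q in Pi_{3/3,6}
   the polynomial P Q36 - P36 Q has degree <= 6 and is O(z^7), hence vanishes.
   Lowest terms, absolute monotonicity and the radius only depend on the rational
   function, which yields R_{3/3,6} = R(psi36) = r36. *)

From Stdlib Require Import Reals Lra Psatz List Classical.
From Coquelicot Require Import Coquelicot.
Import ListNotations.
Open Scope R_scope.

(** * The number r36 *)

Lemma Rpower_third_cube x : 0 < x -> Rpower x (1/3) ^ 3 = x.
Proof.
  intro Hx. rewrite <- Rpower_pow by (unfold Rpower; apply exp_pos).
  rewrite Rpower_mult. replace (1/3 * INR 3) with 1 by (simpl; field).
  now apply Rpower_1.
Qed.

(* Cardano: with u = cbrt(4) (cbrt(3-sqrt5) + cbrt(3+sqrt5)) one has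
   u^3 = 24 + 12 u, and the substitution y = u - 2 gives y^3 + 6 y^2 - 40 = 0. *)
Lemma r36_cubic : r36 ^ 3 + 6 * r36 ^ 2 - 40 = 0.
Proof.
  unfold r36.
  assert (H55 : sqrt 5 * sqrt 5 = 5) by (apply sqrt_sqrt; lra).
  assert (Hs3 : sqrt 5 < 3) by (apply Rsqr_incrst_0; unfold Rsqr; try lra; apply sqrt_pos).
  set (al := Rpower (3 - sqrt 5) (1/3)).
  set (be := Rpower (3 + sqrt 5) (1/3)).
  set (c := Rpower 4 (1/3)).
  assert (Ha : al ^ 3 = 3 - sqrt 5) by (apply Rpower_third_cube; lra).
  assert (Hb : be ^ 3 = 3 + sqrt 5) by (apply Rpower_third_cube; pose proof (sqrt_pos 5); lra).
  assert (Hc : c ^ 3 = 4) by (apply Rpower_third_cube; lra).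
  assert (Hab : al * be = c).
  { unfold al, be, c. rewrite Rpower_mult_distr by (pose proof (sqrt_pos 5); lra).
    f_equal. nra. }
  set (u := c * (al + be)).
  assert (Hu : u ^ 3 = 24 + 12 * u).
  { replace (u ^ 3) with (c^3 * (al^3 + be^3) + 3 * c^3 * (al * be) * (al + be))
      by (unfold u; rewrite <- Hab; ring).
    rewrite Ha, Hb, Hc, Hab. unfold u. ring. }
  replace (-2 + c * (al + be)) with (u - 2) by (unfold u; ring).
  nra.
Qed.

(* Every real root of y^3 + 6y^2 - 40 = (y+4)^2 (y-2) - 8 lies in (2.2076, 2.2077). *)
Lemma cubic_root_bounds y : y ^ 3 + 6 * y ^ 2 - 40 = 0 -> 2.2076 < y < 2.2077.
Proof.
  intro H. replace (y ^ 3 + 6 * y ^ 2 - 40) with ((y+4)^2 * (y-2) - 8) in H by ring.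
  assert (Hy2 : y > 2).
  { destruct (Rle_lt_dec y 2); [|lra]. pose proof (pow2_ge_0 (y+4)). nra. }
  split.
  - destruct (Rle_lt_dec y 2.2076); [|lra].
    assert ((y+4)^2 <= 6.2076^2) by nra. nra.
  - destruct (Rle_lt_dec 2.2077 y); [|lra].
    assert ((y+4)^2 >= 6.2077^2) by nra. nra.
Qed.

(* Two roots in that interval coincide: the cubic is increasing there. *)
Lemma cubic_root_unique u v :
  u ^ 3 + 6 * u ^ 2 - 40 = 0 -> v ^ 3 + 6 * v ^ 2 - 40 = 0 -> u = v.
Proof.
  intros Hu Hv. pose proof (cubic_root_bounds u Hu). pose proof (cubic_root_bounds v Hv).
  assert (E : (u - v) * (u*u + u*v + v*v + 6*(u+v)) = 0) by nra.
  apply Rmult_integral in E. destruct E; nra.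
Qed.

Lemma r36_bounds : 2.2076 < r36 < 2.2077.
Proof. apply cubic_root_bounds, r36_cubic. Qed.

(** * Poles and partial fractions of psi36 *)

(* Q36 has one real zero rho (a root of x^3 - 12x^2 + 60x - 120) and a pair of
   complex zeros sigma = pole_re +- i pole_im, the zeros of [quad]. *)
Definition rho : R := 4 + 4 / (r36 + 4).
Definition quad (x : R) : R := x * x + (rho - 12) * x + (rho * rho - 12 * rho + 60).
Definition pole_re : R := (12 - rho) / 2.
Definition pole_im : R := sqrt ((3 * rho * rho - 24 * rho + 96) / 4).

Lemma rho_bounds : 4.64436 < rho < 4.64438.
Proof.
  pose proof r36_bounds. unfold rho. split.
  - apply Rlt_le_trans with (4 + 4/6.2077); [lra|].
    apply Rplus_le_compat_l, Rmult_le_compat_l, Rinv_le_contravar; lra.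
  - apply Rle_lt_trans with (4 + 4/6.2076); [|lra].
    apply Rplus_le_compat_l, Rmult_le_compat_l, Rinv_le_contravar; lra.
Qed.

(* rho is a zero of -120 Q36, which in the variable y = 4/(rho-4) - 4 is the cubic of r36. *)
Lemma rho_cubic : rho^3 - 12*rho^2 + 60*rho - 120 = 0.
Proof.
  pose proof r36_bounds. pose proof r36_cubic as Hc.
  unfold rho. field_simplify; [|lra].
  replace (-8 * r36 ^ 3 - 48 * r36 ^ 2 + 320) with (-8 * (r36 ^ 3 + 6 * r36 ^ 2 - 40)) by ring.
  rewrite Hc. unfold Rdiv. ring.
Qed.

Lemma pole_im_pos : 0 < pole_im.
Proof.
  apply sqrt_lt_R0. pose proof (pow2_ge_0 (rho - 4)). nra.
Qed.

Lemma pole_im_sq : pole_im * pole_im = (3 * rho * rho - 24 * rho + 96) / 4.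
Proof. apply sqrt_sqrt. pose proof (pow2_ge_0 (rho - 4)). nra. Qed.

Lemma quad_modulus x : quad x = (x - pole_re)^2 + pole_im * pole_im.
Proof. rewrite pole_im_sq. unfold quad, pole_re. field. Qed.

Lemma quad_pos x : 0 < quad x.
Proof.
  rewrite quad_modulus. pose proof pole_im_pos. pose proof (pow2_ge_0 (x - pole_re)). nra.
Qed.

Lemma Q36_factor x : peval Q36 x = -(1/120) * (x - rho) * quad x.
Proof.
  pose proof rho_cubic as H.
  assert (E : peval Q36 x - (-(1/120) * (x - rho) * quad x) = -(1/120)*(rho^3-12*rho^2+60*rho-120))
    by (unfold Q36, quad; simpl; field).
  rewrite H in E. lra.
Qed.

Lemma Q36_pos_nonpos z : z <= 0 -> 0 < peval Q36 z.
Proof.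
  intro Hz. rewrite Q36_factor. pose proof rho_bounds. pose proof (quad_pos z).
  assert (0 < -(1/120) * (z - rho)) by lra. nra.
Qed.

(* The heart of the matter: the complex poles are at least as far from x as
   the real pole exactly when x >= -r36. *)
Lemma quad_minus_square x : quad x - (rho - x)^2 = 12 * (x + r36) / (r36 + 4).
Proof. pose proof r36_bounds. unfold quad, rho. field. lra. Qed.

(* Partial fractions: psi36 = -1 + resA/(rho - x) + (linB x + linC)/quad x. *)
Definition resA : R := 24 * (rho * rho + 10) / (3 * rho * rho - 24 * rho + 60).
Definition linB : R := resA - 24.
Definition linC : R := (240 - resA * (rho * rho - 12 * rho + 60)) / rho.

Lemma partial_fractions x : resA * quad x + (linB * x + linC) * (rho - x) = 24 * (x * x + 10).
Proof.
  pose proof rho_bounds. assert (0 < 3 * rho * rho - 24 * rho + 60) by nra.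
  unfold linB, linC, resA, quad. field. lra.
Qed.

(* The complex residue gamma = gam_re + i gam_im, so that
   (linB x + linC)/quad x = 2 Re(gamma / (sigma - x)). *)
Definition gam_re : R := - linB / 2.
Definition gam_im : R := (linC + linB * pole_re) / (2 * pole_im).
Definition gam_norm2 : R := gam_re * gam_re + gam_im * gam_im.

Lemma quotient_bounds l u a b : 0 < b -> l * b < a < u * b -> l < a / b < u.
Proof.
  intros Hb [Hl Hu]. split.
  - apply Rmult_lt_reg_r with b; auto. unfold Rdiv. rewrite Rmult_assoc, Rinv_l; lra.
  - apply Rmult_lt_reg_r with b; auto. unfold Rdiv. rewrite Rmult_assoc, Rinv_l; lra.
Qed.

Lemma resA_bounds : 57.1 < resA < 57.3.
Proof.
  pose proof rho_bounds. apply quotient_bounds; nra.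
Qed.

Lemma residue_dominance : 4 * gam_norm2 < resA * resA.
Proof.
  pose proof rho_bounds. pose proof resA_bounds. pose proof pole_im_pos.
  assert (Hb2 : 12.3 < pole_im * pole_im < 12.32) by (rewrite pole_im_sq; nra).
  assert (Hc : -267.5 < linC < -265.5).
  { assert (1474 < resA * (rho * rho - 12 * rho + 60) < 1482) by nra.
    apply quotient_bounds; lra. }
  set (num := linC + linB * pole_re).
  assert (Hnum : -146 < num < -143) by (unfold num, linB, pole_re; nra).
  assert (E : 4 * gam_norm2 = linB * linB + num * num / (pole_im * pole_im)).
  { unfold gam_norm2, gam_re, gam_im. fold num. field. lra. }
  assert (num * num / (pole_im * pole_im) < 1740).
  { apply (quotient_bounds (-1)); nra. }
  unfold linB in E. nra.
Qed.

Lemma gam_norm2_pos : 0 < gam_norm2.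
Proof.
  pose proof resA_bounds. unfold gam_norm2, gam_re, linB.
  pose proof (Rle_0_sqr gam_im). unfold Rsqr in *. nra.
Qed.

(** * A closed form for all derivatives of psi36 *)

(* w(x) = 1/(sigma - x) = w_re x + i w_im x; it satisfies w' = w^2. *)
Definition w_re (x : R) : R := (pole_re - x) / quad x.
Definition w_im (x : R) : R := - pole_im / quad x.

Lemma quad_neq0 x : quad x <> 0.
Proof. pose proof (quad_pos x); lra. Qed.

Lemma w_re_derive x : is_derive w_re x (w_re x ^ 2 - w_im x ^ 2).
Proof.
  pose proof (quad_neq0 x) as Hq. unfold w_re, w_im. unfold quad in *.
  auto_derive; auto.
  replace ((- pole_im / _) ^ 2) with
    (pole_im * pole_im / ((x*x + (rho-12)*x + (rho*rho-12*rho+60)) * (x*x + (rho-12)*x + (rho*rho-12*rho+60))))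
    by (field; auto).
  rewrite pole_im_sq. unfold pole_re. field. auto.
Qed.

Lemma w_im_derive x : is_derive w_im x (2 * w_re x * w_im x).
Proof.
  pose proof (quad_neq0 x) as Hq. unfold w_re, w_im. unfold quad in *.
  auto_derive; auto. unfold pole_re. field. auto.
Qed.

Fixpoint wpow (n : nat) (x : R) : R * R :=
  match n with
  | O => (1, 0)
  | S n => (w_re x * fst (wpow n x) - w_im x * snd (wpow n x),
            w_re x * snd (wpow n x) + w_im x * fst (wpow n x))
  end.
Definition wpow_re (n : nat) (x : R) : R := fst (wpow n x).
Definition wpow_im (n : nat) (x : R) : R := snd (wpow n x).

Lemma wpow_re_S n x : wpow_re (S n) x = w_re x * wpow_re n x - w_im x * wpow_im n x.
Proof. reflexivity. Qed.
Lemma wpow_im_S n x : wpow_im (S n) x = w_re x * wpow_im n x + w_im x * wpow_re n x.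
Proof. reflexivity. Qed.

Lemma is_derive_eq (f : R -> R) (x l1 l2 : R) : is_derive f x l1 -> l1 = l2 -> is_derive f x l2.
Proof. intros H ->; exact H. Qed.

Lemma wpow_derive n x :
  is_derive (wpow_re n) x (INR n * wpow_re (S n) x) /\
  is_derive (wpow_im n) x (INR n * wpow_im (S n) x).
Proof.
  induction n as [|n [IU IV]].
  - split; [change (wpow_re 0) with (fun _ : R => 1) | change (wpow_im 0) with (fun _ : R => 0)];
      (eapply is_derive_eq; [apply (is_derive_const (K := R_AbsRing))|]);
      simpl; unfold zero; simpl; ring.
  - pose proof (is_derive_mult _ _ _ _ _ (w_re_derive x) IU Rmult_comm) as H1.
    pose proof (is_derive_mult _ _ _ _ _ (w_im_derive x) IV Rmult_comm) as H2.
    pose proof (is_derive_mult _ _ _ _ _ (w_re_derive x) IV Rmult_comm) as H3.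
    pose proof (is_derive_mult _ _ _ _ _ (w_im_derive x) IU Rmult_comm) as H4.
    split.
    + eapply is_derive_eq; [exact (is_derive_minus _ _ x _ _ H1 H2)|].
      rewrite S_INR. unfold minus, plus, mult, opp; simpl.
      rewrite (wpow_re_S (S n)), (wpow_re_S n), (wpow_im_S n). ring.
    + eapply is_derive_eq; [exact (is_derive_plus _ _ x _ _ H3 H4)|].
      rewrite S_INR. unfold plus, mult; simpl.
      rewrite (wpow_im_S (S n)), (wpow_re_S n), (wpow_im_S n). ring.
Qed.

Lemma wpow_modulus n x : wpow_re n x ^ 2 + wpow_im n x ^ 2 = (/ quad x) ^ n.
Proof.
  induction n as [|n IH]; [simpl; unfold wpow_re, wpow_im; simpl; ring|].
  rewrite wpow_re_S, wpow_im_S. simpl pow at 3. rewrite <- IH.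
  assert (Hw : w_re x ^ 2 + w_im x ^ 2 = / quad x).
  { pose proof (quad_neq0 x) as Hq.
    replace (w_re x ^ 2 + w_im x ^ 2) with (((x - pole_re)^2 + pole_im * pole_im) / (quad x * quad x))
      by (unfold w_re, w_im; field; auto).
    rewrite <- quad_modulus. field. auto. }
  rewrite <- Hw. ring.
Qed.

Lemma inv_pow_derive (a c : R) n x :
  x <> c -> is_derive (fun y => a / (c - y)^n) x (INR n * a / (c - x)^(S n)).
Proof.
  intro H. assert (c - x <> 0) by lra.
  auto_derive; [apply pow_nonzero; auto|].
  destruct n; cbn [pow Nat.pred]; [simpl INR; field; auto|].
  replace (c + - x) with (c - x) by ring.
  assert ((c - x)^n <> 0) by (apply pow_nonzero; auto). field. split; auto.
Qed.

Definition psi_deriv (k : nat) (x : R) : R :=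
  (match k with O => -1 | _ => 0 end) +
  INR (Factorial.fact k) *
    (resA / (rho - x)^(S k) + 2 * (gam_re * wpow_re (S k) x - gam_im * wpow_im (S k) x)).

Lemma psi_deriv_derive k x : x <> rho -> is_derive (psi_deriv k) x (psi_deriv (S k) x).
Proof.
  intro H. destruct (wpow_derive (S k) x) as [IU IV].
  pose proof (inv_pow_derive resA rho (S k) x H) as H1.
  pose proof (is_derive_plus _ _ x _ _ H1
     (is_derive_scal _ x 2 _ (is_derive_minus _ _ x _ _
        (is_derive_scal _ x gam_re _ IU) (is_derive_scal _ x gam_im _ IV)))) as H2.
  pose proof (is_derive_plus _ _ x _ _
     (is_derive_const (K := R_AbsRing) (match k with O => -1 | _ => 0 end) x)
     (is_derive_scal _ x (INR (Factorial.fact k)) _ H2)) as H3.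
  eapply is_derive_eq; [exact H3|].
  unfold psi_deriv. rewrite fact_simpl, mult_INR, (S_INR k).
  unfold minus, plus, mult, opp, zero; simpl. unfold Rdiv. ring.
Qed.

Lemma psi_deriv_0 x : x <> rho -> psi_deriv 0 x = peval P36 x / peval Q36 x.
Proof.
  intro H. assert (rho - x <> 0) by lra.
  pose proof (quad_neq0 x). pose proof pole_im_pos.
  assert (HQ : peval Q36 x <> 0).
  { rewrite Q36_factor. repeat apply Rmult_integral_contrapositive; split; lra. }
  assert (HN : peval P36 x = (2 + x*x/5) - peval Q36 x) by (unfold P36, Q36; simpl; field).
  assert (Hg : 2 * (gam_re * wpow_re 1 x - gam_im * wpow_im 1 x) = (linB * x + linC) / quad x).
  { unfold wpow_re, wpow_im; simpl. unfold gam_re, gam_im, w_re, w_im. field. split; lra. }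
  unfold psi_deriv. rewrite Hg, HN.
  replace ((2 + x * x / 5 - peval Q36 x) / peval Q36 x)
    with ((24 * (x * x + 10)) / ((rho - x) * quad x) - 1)
    by (rewrite Q36_factor; field; repeat split; lra).
  rewrite <- (partial_fractions x). simpl. field. split; lra.
Qed.

(** * Absolute monotonicity on [-r36, 0] *)

(* Cauchy-Schwarz: |Re(gamma w^n)|^2 <= |gamma|^2 |w|^(2n). *)
Lemma residue_term_sq n x :
  (gam_re * wpow_re n x - gam_im * wpow_im n x)^2 <= gam_norm2 * (/ quad x)^n.
Proof.
  rewrite <- wpow_modulus. unfold gam_norm2.
  pose proof (pow2_ge_0 (gam_re * wpow_im n x + gam_im * wpow_re n x)). nra.
Qed.

Lemma pole_terms_pos n x :
  -r36 <= x <= 0 ->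
  0 < resA / (rho - x)^n + 2 * (gam_re * wpow_re n x - gam_im * wpow_im n x).
Proof.
  intro Hx. pose proof rho_bounds. pose proof resA_bounds.
  set (W := (rho - x)^n). set (Z := gam_re * wpow_re n x - gam_im * wpow_im n x).
  assert (HW : 0 < / W) by (apply Rinv_0_lt_compat, pow_lt; lra).
  assert (Hfar : (/ quad x)^n <= (/ W)^2).
  { assert (Hq : (rho - x)^2 <= quad x).
    { pose proof (quad_minus_square x).
      assert (0 <= 12 * (x + r36) / (r36 + 4)) by (apply Rle_mult_inv_pos; lra). lra. }
    replace ((/ W)^2) with ((/ (rho - x)^2)^n)
      by (unfold W; rewrite !pow_inv, <- !pow_mult, Nat.mul_comm; reflexivity).
    apply pow_incr. split.
    - left. apply Rinv_0_lt_compat, quad_pos.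
    - apply Rinv_le_contravar; auto. apply pow_lt. lra. }
  assert (HZ : Z^2 <= gam_norm2 * (/ W)^2).
  { apply Rle_trans with (gam_norm2 * (/ quad x)^n); [apply residue_term_sq|].
    apply Rmult_le_compat_l; auto. left; apply gam_norm2_pos. }
  assert (HW2 : 0 < (/ W)^2) by (apply pow_lt; auto).
  assert (4 * gam_norm2 * (/ W)^2 < resA * resA * (/ W)^2)
    by (apply Rmult_lt_compat_r; auto; apply residue_dominance).
  assert ((2 * Z)^2 < (resA * / W)^2) by nra.
  assert (0 < resA * / W) by (apply Rmult_lt_0_compat; lra).
  unfold Rdiv. fold W Z. nra.
Qed.

Lemma psi_deriv_nonneg k x : -r36 <= x <= 0 -> 0 <= psi_deriv k x.
Proof.
  intro Hx. pose proof rho_bounds. pose proof r36_bounds. destruct k as [|k].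
  - rewrite psi_deriv_0 by lra. apply Rle_mult_inv_pos.
    + unfold P36; simpl. nra.
    + apply Q36_pos_nonpos. lra.
  - unfold psi_deriv. rewrite Rplus_0_l. apply Rmult_le_pos.
    + apply pos_INR.
    + left. apply pole_terms_pos. auto.
Qed.

(** * Plane rotations visit the left half-plane in every long window *)

Fixpoint psum (F : nat -> R) (N : nat) : R :=
  match N with O => 0 | S N => psum F N + F N end.

Lemma psum_le F G N : (forall k, (k < N)%nat -> F k <= G k) -> psum F N <= psum G N.
Proof.
  induction N as [|N IH]; simpl; intros H; [lra|].
  assert (F N <= G N) by (apply H; lia).
  assert (psum F N <= psum G N) by (apply IH; intros; apply H; lia). lra.
Qed.

Lemma psum_affine a b F N : psum (fun k => a * F k + b) N = a * psum F N + b * INR N.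
Proof. induction N as [|N IH]; cbn [psum]; [simpl; ring|]. rewrite IH, S_INR. ring. Qed.

Section Rotation.

(* (t n, w n) is the orbit of a vector under the rotation of angle theta,
   c = cos theta, s = sin theta. *)
Variables (t w : nat -> R) (c s : R).
Hypothesis cs_unit : c * c + s * s = 1.
Hypothesis rot_t : forall n, t (S n) = c * t n - s * w n.
Hypothesis rot_w : forall n, w (S n) = s * t n + c * w n.

Lemma rot_norm n : t n ^ 2 + w n ^ 2 = t 0%nat ^ 2 + w 0%nat ^ 2.
Proof.
  induction n as [|n IH]; auto. rewrite rot_t, rot_w, <- IH.
  replace ((c * t n - s * w n) ^ 2 + (s * t n + c * w n) ^ 2)
    with ((c * c + s * s) * (t n ^ 2 + w n ^ 2)) by ring.
  rewrite cs_unit. ring.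
Qed.

(* (I - rotation) applied to a window sum telescopes. *)
Lemma rot_window_telescope M N :
  (1 - c) * psum (fun k => t (M + k)%nat) N + s * psum (fun k => w (M + k)%nat) N
    = t M - t (M + N)%nat /\
  - s * psum (fun k => t (M + k)%nat) N + (1 - c) * psum (fun k => w (M + k)%nat) N
    = w M - w (M + N)%nat.
Proof.
  induction N as [|N [I1 I2]]; simpl.
  - rewrite Nat.add_0_r. split; ring.
  - rewrite Nat.add_succ_r, rot_t, rot_w. split; lra.
Qed.

(* Hence window sums are bounded independently of the window:
   |1 - e^(i theta)|^2 |sum|^2 <= (2 |v|)^2. *)
Lemma rot_window_sum M N :
  (2 - 2 * c) * psum (fun k => t (M + k)%nat) N ^ 2 <= 4 * (t 0%nat ^ 2 + w 0%nat ^ 2).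
Proof.
  destruct (rot_window_telescope M N) as [I1 I2].
  set (ST := psum (fun k => t (M + k)%nat) N) in *.
  set (SW := psum (fun k => w (M + k)%nat) N) in *.
  pose proof (rot_norm M). pose proof (rot_norm (M + N)).
  assert (E : (2 - 2 * c) * (ST^2 + SW^2)
              = (t M - t (M + N)%nat)^2 + (w M - w (M + N)%nat)^2).
  { rewrite <- I1, <- I2. replace (2 - 2 * c) with ((1 - c)^2 + s^2) by nra. ring. }
  assert (c <= 1) by nra.
  assert (0 <= (2 - 2 * c) * SW^2) by (apply Rmult_le_pos; [lra|apply pow2_ge_0]).
  pose proof (pow2_ge_0 (t M + t (M + N)%nat)). pose proof (pow2_ge_0 (w M + w (M + N)%nat)).
  nra.
Qed.

(* Squaring (as complex numbers) gives the rotation by the double angle. *)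
Lemma rot_double_t n :
  t (S n) ^ 2 - w (S n) ^ 2
  = (c * c - s * s) * (t n ^ 2 - w n ^ 2) - 2 * c * s * (2 * t n * w n).
Proof. rewrite rot_t, rot_w. ring. Qed.

Lemma rot_double_w n :
  2 * t (S n) * w (S n)
  = 2 * c * s * (t n ^ 2 - w n ^ 2) + (c * c - s * s) * (2 * t n * w n).
Proof. rewrite rot_t, rot_w. ring. Qed.

End Rotation.

Lemma rot_window_sq_sum t w c s M N :
  c * c + s * s = 1 ->
  (forall n, t (S n) = c * t n - s * w n) ->
  (forall n, w (S n) = s * t n + c * w n) ->
  s <> 0 ->
  INR N * (t 0%nat ^ 2 + w 0%nat ^ 2) / 2 - (t 0%nat ^ 2 + w 0%nat ^ 2) / (2 * Rabs s)
    <= psum (fun k => t (M + k)%nat ^ 2) N.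
Proof.
  intros Hcs Ht Hw Hs.
  set (G := t 0%nat ^ 2 + w 0%nat ^ 2).
  set (t2 := fun n => t n ^ 2 - w n ^ 2). set (w2 := fun n => 2 * t n * w n).
  set (c2 := c * c - s * s). set (s2 := 2 * c * s).
  assert (Hcs2 : c2 * c2 + s2 * s2 = 1).
  { unfold c2, s2. replace ((c * c - s * s) * (c * c - s * s) + 2 * c * s * (2 * c * s))
      with ((c * c + s * s)^2) by ring. rewrite Hcs. ring. }
  pose proof (rot_window_sum t2 w2 c2 s2 Hcs2 (rot_double_t t w c s Ht Hw)
                (rot_double_w t w c s Ht Hw) M N) as Hsum.
  replace (t2 0%nat ^ 2 + w2 0%nat ^ 2) with (G * G) in Hsum by (unfold t2, w2, G; ring).
  replace (2 - 2 * c2) with (4 * (s * s)) in Hsum by (unfold c2; nra).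
  set (ST2 := psum (fun k => t2 (M + k)%nat) N) in *.
  assert (Has : 0 < Rabs s) by (apply Rabs_pos_lt; auto).
  assert (Has2 : Rabs s * Rabs s = s * s) by (rewrite <- Rabs_mult; apply Rabs_pos_eq; nra).
  assert (HG : 0 <= G) by (unfold G; pose proof (pow2_ge_0 (t 0%nat)); pose proof (pow2_ge_0 (w 0%nat)); lra).
  assert (Hlow : - G <= ST2 * Rabs s) by nra.
  assert (Hsq : psum (fun k => t (M + k)%nat ^ 2) N = 1/2 * ST2 + G/2 * INR N).
  { unfold ST2. rewrite <- psum_affine.
    apply Rle_antisym; apply psum_le; intros k _;
      pose proof (rot_norm t w c s Hcs Ht Hw (M + k)) as Hn; fold G in Hn; cbv beta; unfold t2; lra. }
  rewrite Hsq.
  assert (- G / Rabs s <= ST2).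
  { apply Rmult_le_reg_r with (Rabs s); auto. unfold Rdiv. rewrite Rmult_assoc, Rinv_l; lra. }
  replace (G / (2 * Rabs s)) with (G / Rabs s / 2) by (field; lra).
  unfold Rdiv in *. lra.
Qed.

Lemma rot_window_neg t w c s :
  c * c + s * s = 1 ->
  (forall n, t (S n) = c * t n - s * w n) ->
  (forall n, w (S n) = s * t n + c * w n) ->
  s <> 0 -> 0 < t 0%nat ^ 2 + w 0%nat ^ 2 ->
  exists N, forall M, exists k,
    (k < N)%nat /\ t (M + k)%nat <= - sqrt (t 0%nat ^ 2 + w 0%nat ^ 2) / 8.
Proof.
  intros Hcs Ht Hw Hs HG.
  set (G := t 0%nat ^ 2 + w 0%nat ^ 2) in *. set (g := sqrt G).
  assert (Hg : 0 < g) by (apply sqrt_lt_R0; auto).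
  assert (Hgg : g * g = G) by (apply sqrt_sqrt; lra).
  assert (Hc1 : 0 < 2 - 2 * c) by (assert (0 < s * s) by (apply Rsqr_pos_lt; auto); nra).
  set (K := sqrt (4 * G / (2 - 2 * c))).
  assert (HK : forall M N, psum (fun k => t (M + k)%nat) N <= K).
  { intros M N. pose proof (rot_window_sum t w c s Hcs Ht Hw M N) as H.
    fold G in H. apply Rsqr_incr_0_var; [|apply sqrt_pos].
    unfold K, Rsqr. rewrite sqrt_sqrt by (apply Rle_mult_inv_pos; lra).
    apply Rmult_le_reg_l with (2 - 2 * c); auto. field_simplify; lra. }
  assert (Has : 0 < Rabs s) by (apply Rabs_pos_lt; auto).
  destruct (INR_archimed 1 (4 * (g * K + G / (2 * Rabs s)) / G)) as [N HN]; [lra|].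
  exists N. intro M.
  destruct (classic (exists k, (k < N)%nat /\ t (M + k)%nat <= - g / 8)) as [Hex|Hno];
    [exact Hex|exfalso].
  (* Otherwise t > -g/8 on the window, so t^2 <= g t + G/4 there. *)
  assert (Hpt : forall k, (k < N)%nat -> t (M + k)%nat ^ 2 <= g * t (M + k)%nat + G / 4).
  { intros k Hk.
    assert (Hlow : - g / 8 < t (M + k)%nat).
    { destruct (Rlt_le_dec (- g / 8) (t (M + k)%nat)); auto. exfalso; apply Hno; eauto. }
    pose proof (rot_norm t w c s Hcs Ht Hw (M + k)) as Hn. fold G in Hn.
    set (x := t (M + k)%nat) in *. pose proof (pow2_ge_0 (w (M + k)%nat)).
    destruct (Rle_lt_dec 0 x); [assert (x <= g) by nra|]; nra. }
  assert (Hup : psum (fun k => t (M + k)%nat ^ 2) N <= g * K + G / 4 * INR N).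
  { apply Rle_trans with (g * psum (fun k => t (M + k)%nat) N + G / 4 * INR N).
    - rewrite <- psum_affine. apply psum_le. exact Hpt.
    - pose proof (HK M N). nra. }
  pose proof (rot_window_sq_sum t w c s M N Hcs Ht Hw Hs) as Hlo. fold G in Hlo.
  assert (INR N * 1 * G > 4 * (g * K + G / (2 * Rabs s))).
  { apply Rmult_gt_reg_r with (/ G); [apply Rinv_0_lt_compat; auto|].
    replace (INR N * 1 * G * / G) with (INR N * 1) by (field; lra). unfold Rdiv in HN. lra. }
  lra.
Qed.

(** * Failure of absolute monotonicity left of -r36 *)

(* Normalising gamma w(x)^n by |w(x)|^n = quad(x)^(-n/2) gives the orbit of gamma
   under the rotation by the argument of w(x). *)
Definition rot_c (x : R) : R := sqrt (quad x) * w_re x.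
Definition rot_s (x : R) : R := sqrt (quad x) * w_im x.
Definition orbit_t (x : R) (n : nat) : R :=
  sqrt (quad x) ^ n * (gam_re * wpow_re n x - gam_im * wpow_im n x).
Definition orbit_w (x : R) (n : nat) : R :=
  sqrt (quad x) ^ n * (gam_re * wpow_im n x + gam_im * wpow_re n x).

Lemma sqrt_quad_sq x : sqrt (quad x) * sqrt (quad x) = quad x.
Proof. apply sqrt_sqrt. pose proof (quad_pos x). lra. Qed.

Lemma rot_unit x : rot_c x * rot_c x + rot_s x * rot_s x = 1.
Proof.
  pose proof (quad_neq0 x). pose proof (sqrt_quad_sq x) as Hs.
  unfold rot_c, rot_s, w_re, w_im.
  replace (sqrt (quad x) * ((pole_re - x) / quad x) * (sqrt (quad x) * ((pole_re - x) / quad x))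
           + sqrt (quad x) * (- pole_im / quad x) * (sqrt (quad x) * (- pole_im / quad x)))
    with (sqrt (quad x) * sqrt (quad x) * ((x - pole_re)^2 + pole_im * pole_im) / (quad x * quad x))
    by (field; auto).
  rewrite <- quad_modulus, Hs. field. auto.
Qed.

Lemma orbit_t_step x n : orbit_t x (S n) = rot_c x * orbit_t x n - rot_s x * orbit_w x n.
Proof. unfold orbit_t, orbit_w, rot_c, rot_s. rewrite wpow_re_S, wpow_im_S. simpl pow. ring. Qed.

Lemma orbit_w_step x n : orbit_w x (S n) = rot_s x * orbit_t x n + rot_c x * orbit_w x n.
Proof. unfold orbit_t, orbit_w, rot_c, rot_s. rewrite wpow_re_S, wpow_im_S. simpl pow. ring. Qed.

Lemma rot_s_neq0 x : rot_s x <> 0.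
Proof.
  pose proof (quad_pos x). pose proof pole_im_pos.
  assert (0 < sqrt (quad x)) by (apply sqrt_lt_R0; auto).
  unfold rot_s, w_im. apply Rmult_integral_contrapositive; split; [lra|].
  unfold Rdiv. apply Rmult_integral_contrapositive; split; [lra|].
  apply Rinv_neq_0_compat. lra.
Qed.

Lemma orbit_start x : orbit_t x 0 ^ 2 + orbit_w x 0 ^ 2 = gam_norm2.
Proof. unfold orbit_t, orbit_w, gam_norm2, wpow_re, wpow_im. simpl. ring. Qed.

Lemma complex_poles_closer x : x < - r36 -> sqrt (quad x) < rho - x.
Proof.
  intro Hx. pose proof r36_bounds. pose proof rho_bounds.
  rewrite <- (sqrt_pow2 (rho - x)) by lra.
  apply sqrt_lt_1; [left; apply quad_pos|apply pow2_ge_0|].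
  pose proof (quad_minus_square x).
  assert (12 * (x + r36) / (r36 + 4) < 0) by (apply Rdiv_neg_pos; lra). lra.
Qed.

Lemma real_pole_negligible x eps :
  x < - r36 -> 0 < eps ->
  exists M, forall n, (M <= n)%nat -> resA * sqrt (quad x) ^ n < eps * (rho - x) ^ n.
Proof.
  intros Hx Heps. pose proof rho_bounds. pose proof r36_bounds. pose proof resA_bounds.
  set (sg := sqrt (quad x)).
  assert (Hsg : 0 < sg) by (apply sqrt_lt_R0, quad_pos).
  assert (Hfar : sg < rho - x) by apply complex_poles_closer, Hx.
  destruct (pow_lt_1_zero (sg / (rho - x))) with (y := eps / resA) as [M HM].
  { rewrite Rabs_pos_eq by (apply Rlt_le, Rdiv_lt_0_compat; lra).
    apply Rmult_lt_reg_r with (rho - x); [lra|]. unfold Rdiv. rewrite Rmult_assoc, Rinv_l; lra. }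
  { apply Rdiv_lt_0_compat; lra. }
  exists M. intros n Hn. specialize (HM n Hn).
  assert (HW : 0 < (rho - x) ^ n) by (apply pow_lt; lra).
  rewrite Rabs_pos_eq in HM by (apply pow_le, Rlt_le, Rdiv_lt_0_compat; lra).
  unfold Rdiv in HM. rewrite Rpow_mult_distr, pow_inv in HM.
  apply Rmult_lt_compat_r with (r := resA * (rho - x) ^ n) in HM; [|nra].
  replace (sg ^ n * / (rho - x) ^ n * (resA * (rho - x) ^ n)) with (resA * sg ^ n) in HM
    by (field; lra).
  replace (eps * / resA * (resA * (rho - x) ^ n)) with (eps * (rho - x) ^ n) in HM
    by (field; lra).
  exact HM.
Qed.

(* Some derivative of psi36 is negative at every x < -r36: in a late window the
   rotating complex term is at its most negative while the real pole term is
   negligible. *)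
Lemma psi_deriv_neg x : x < - r36 -> exists k, psi_deriv k x < 0.
Proof.
  intro Hx. pose proof rho_bounds. pose proof r36_bounds.
  set (g := sqrt gam_norm2).
  assert (Hg : 0 < g) by (apply sqrt_lt_R0, gam_norm2_pos).
  destruct (rot_window_neg (orbit_t x) (orbit_w x) (rot_c x) (rot_s x)
              (rot_unit x) (orbit_t_step x) (orbit_w_step x) (rot_s_neq0 x))
    as [N HN]; [rewrite orbit_start; apply gam_norm2_pos|].
  rewrite orbit_start in HN. fold g in HN.
  destruct (real_pole_negligible x (g / 4) Hx ltac:(lra)) as [M HM].
  destruct (HN (S M)) as [k [_ Hk]].
  exists (M + k)%nat.
  set (n := S (M + k)). replace (S M + k)%nat with n in Hk by (unfold n; lia).
  specialize (HM n ltac:(unfold n; lia)).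
  set (W := (rho - x) ^ n) in *. set (Sn := sqrt (quad x) ^ n) in *.
  assert (HW : 0 < W) by (apply pow_lt; lra).
  assert (HSn : 0 < Sn) by (apply pow_lt, sqrt_lt_R0, quad_pos).
  set (Z := gam_re * wpow_re n x - gam_im * wpow_im n x).
  assert (HZ : Sn * Z <= - g / 8) by exact Hk.
  assert (Hneg : resA / W + 2 * Z < 0).
  { apply Rmult_lt_reg_r with (W * Sn); [nra|].
    replace ((resA / W + 2 * Z) * (W * Sn)) with (resA * Sn + 2 * (Sn * Z) * W) by (field; lra).
    nra. }
  unfold psi_deriv. fold n. fold W Z.
  assert (0 < INR (Factorial.fact (M + k))) by apply INR_fact_lt_0.
  assert ((match (M + k)%nat with O => -1 | _ => 0 end) <= 0) by (destruct (M + k)%nat; lra).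
  nra.
Qed.

(** * Real polynomials as coefficient lists *)

Lemma peval_continuous L x : continuity_pt (peval L) x.
Proof.
  induction L as [|a L IH]; simpl.
  - apply continuity_pt_const. intros u v; reflexivity.
  - apply (continuity_pt_plus (fct_cte a) (id * peval L)%F).
    + apply continuity_pt_const. intros u v; reflexivity.
    + apply continuity_pt_mult; auto. apply derivable_continuous_pt, derivable_pt_id.
Qed.

Fixpoint padd (A B : list R) : list R :=
  match A, B with
  | [], _ => B
  | _, [] => A
  | a :: A', b :: B' => (a + b) :: padd A' B'
  end.
Definition pscale (c : R) (A : list R) : list R := map (Rmult c) A.
Fixpoint pmul (A B : list R) : list R :=
  match A with
  | [] => []
  | a :: A' => padd (pscale a B) (0 :: pmul A' B)
  end.

Lemma peval_padd A B x : peval (padd A B) x = peval A x + peval B x.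
Proof.
  revert B; induction A as [|a A IH]; intros [|b B]; simpl; try ring. rewrite IH. ring.
Qed.

Lemma peval_pscale c A x : peval (pscale c A) x = c * peval A x.
Proof. induction A as [|a A IH]; simpl; [ring|]. rewrite IH. ring. Qed.

Lemma peval_pmul A B x : peval (pmul A B) x = peval A x * peval B x.
Proof.
  induction A as [|a A IH]; simpl; [ring|].
  rewrite peval_padd, peval_pscale. simpl. rewrite IH. ring.
Qed.

Lemma length_padd A B : length (padd A B) = Nat.max (length A) (length B).
Proof.
  revert B; induction A as [|a A IH]; intros [|b B]; simpl; auto.
Qed.

Lemma deg_le_padd A B n : deg_le A n -> deg_le B n -> deg_le (padd A B) n.
Proof. unfold deg_le. rewrite length_padd. lia. Qed.

Lemma deg_le_pscale c A n : deg_le A n -> deg_le (pscale c A) n.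
Proof. unfold deg_le, pscale. now rewrite length_map. Qed.

Lemma deg_le_pmul A B m n : deg_le A m -> deg_le B n -> deg_le (pmul A B) (m + n).
Proof.
  revert m; induction A as [|a A IH]; intros m HA HB; [unfold deg_le; simpl; lia|].
  simpl. apply deg_le_padd.
  - apply deg_le_pscale. unfold deg_le in *. lia.
  - unfold deg_le in *. simpl in HA |- *. destruct m as [|m].
    + destruct A; simpl in HA; [simpl; lia|lia].
    + specialize (IH m ltac:(lia) HB). lia.
Qed.

Fixpoint pshift (c : R) (L : list R) : list R :=
  match L with
  | [] => []
  | a :: L' => padd [a] (padd (pscale c (pshift c L')) (0 :: pshift c L'))
  end.

Lemma peval_pshift c L z : peval (pshift c L) z = peval L (c + z).
Proof.
  induction L as [|a L IH]; [simpl; ring|].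
  cbn [pshift]. rewrite !peval_padd, peval_pscale. simpl. rewrite IH. ring.
Qed.

Fixpoint sumabs (L : list R) : R := match L with [] => 0 | a :: L => Rabs a + sumabs L end.

Lemma peval_bound L z : Rabs z <= 1 -> Rabs (peval L z) <= sumabs L.
Proof.
  intro Hz. induction L as [|a L IH]; simpl.
  - rewrite Rabs_R0; lra.
  - eapply Rle_trans; [apply Rabs_triang|]. rewrite Rabs_mult.
    assert (Rabs z * Rabs (peval L z) <= 1 * sumabs L)
      by (apply Rmult_le_compat; auto using Rabs_pos). lra.
Qed.

Lemma zero_of_small h C :
  (forall eps, 0 < eps -> exists z, 0 < z < eps /\ Rabs h <= C * z) -> h = 0.
Proof.
  intro H. destruct (Req_dec h 0) as [|Hne]; auto. exfalso.
  assert (Hh : 0 < Rabs h) by (apply Rabs_pos_lt; auto).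
  destruct (H (Rabs h / (Rabs C + 1))) as [z [[Hz0 Hz] Hb]].
  { apply Rdiv_lt_0_compat; auto. pose proof (Rabs_pos C). lra. }
  assert (z * (Rabs C + 1) < Rabs h).
  { apply Rmult_lt_reg_r with (/ (Rabs C + 1)); [apply Rinv_0_lt_compat; pose proof (Rabs_pos C); lra|].
    replace (z * (Rabs C + 1) * / (Rabs C + 1)) with z by (field; pose proof (Rabs_pos C); lra).
    exact Hz. }
  pose proof (Rle_abs C). nra.
Qed.

Lemma poly_small_zero (Gd : R -> Prop) L m K del :
  (length L <= m)%nat -> 0 < del ->
  (forall z, 0 < z < del -> Gd z -> Rabs (peval L z) <= K * z ^ m) ->
  (forall eps, 0 < eps -> exists z, 0 < z < eps /\ Gd z) ->
  forall x, peval L x = 0.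
Proof.
  revert m K del. induction L as [|h L IH]; intros m K del Hlen Hdel Hb Hg x; simpl; auto.
  destruct m as [|m]; simpl in Hlen; [lia|].
  assert (Hh : h = 0).
  { apply (zero_of_small h (Rabs K + sumabs L)). intros eps Heps.
    destruct (Hg (Rmin eps (Rmin del 1))) as [z [[Hz0 Hz] Hgz]].
    { repeat apply Rmin_glb_lt; lra. }
    pose proof (Rmin_l eps (Rmin del 1)). pose proof (Rmin_r eps (Rmin del 1)).
    pose proof (Rmin_l del 1). pose proof (Rmin_r del 1).
    exists z. split; [lra|].
    specialize (Hb z ltac:(lra) Hgz). simpl in Hb.
    assert (Hzm : z ^ m <= 1) by (rewrite <- (pow1 m); apply pow_incr; lra).
    assert (HL : Rabs (z * peval L z) <= z * sumabs L).
    { rewrite Rabs_mult, Rabs_right by lra.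
      apply Rmult_le_compat_l; [lra|]. apply peval_bound. rewrite Rabs_right; lra. }
    assert (HK : K * (z * z ^ m) <= Rabs K * z).
    { assert (0 <= z ^ m) by (apply pow_le; lra).
      apply Rle_trans with (Rabs K * (z * z ^ m)).
      - apply Rmult_le_compat_r; [nra|apply Rle_abs].
      - apply Rmult_le_compat_l; [apply Rabs_pos|nra]. }
    replace h with ((h + z * peval L z) - z * peval L z) at 1 by ring.
    eapply Rle_trans; [apply Rabs_triang|]. rewrite Rabs_Ropp. lra. }
  subst h. rewrite (IH m K del); [ring|lia|auto| |auto].
  intros z Hz Hgz. specialize (Hb z Hz Hgz). simpl in Hb.
  rewrite Rplus_0_l, Rabs_mult, Rabs_right in Hb by lra.
  apply Rmult_le_reg_l with z; lra.
Qed.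

Lemma poly_zero_on_interval L z0 eps :
  0 < eps -> (forall z, z0 < z < z0 + eps -> peval L z = 0) -> forall x, peval L x = 0.
Proof.
  intros Heps H x.
  replace x with (z0 + (x - z0)) by ring. rewrite <- peval_pshift.
  apply (poly_small_zero (fun _ => True) (pshift z0 L) (length (pshift z0 L)) 0 eps); auto.
  - intros z Hz _. rewrite peval_pshift, H by lra. rewrite Rabs_R0. lra.
  - intros e He. exists (Rmin e 1 / 2). pose proof (Rmin_l e 1). pose proof (Rmin_r e 1).
    assert (0 < Rmin e 1) by (apply Rmin_glb_lt; lra). split; [lra|auto].
Qed.

Lemma poly_nonroot_near L :
  (exists w, peval L w <> 0) ->
  forall z0 eps, 0 < eps -> exists z, z0 < z < z0 + eps /\ peval L z <> 0.
Proof.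
  intros [w Hw] z0 eps Heps.
  apply NNPP. intro Hno. apply Hw. apply (poly_zero_on_interval L z0 eps Heps).
  intros z Hz. apply NNPP. intro Hnz. apply Hno. exists z. auto.
Qed.

Lemma continuous_cancel (L : list R) (F : R -> R) :
  (exists w, peval L w <> 0) -> (forall x, continuity_pt F x) ->
  (forall x, F x * peval L x = 0) -> forall x, F x = 0.
Proof.
  intros Hw Hc HF x.
  destruct (Req_dec (F x) 0) as [|Hne]; auto. exfalso.
  destruct (Hc x (Rabs (F x))) as [del [Hd Hz]]; [apply Rabs_pos_lt; auto|].
  destruct (poly_nonroot_near L Hw x del Hd) as [z [Hzr Hzn]].
  assert (HFz : F z = 0).
  { specialize (HF z). apply Rmult_integral in HF. destruct HF; tauto. }
  assert (Hd' : Rabs (z - x) < del) by (rewrite Rabs_right; lra).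
  assert (Hxz : x <> z) by (apply Rlt_not_eq; lra).
  specialize (Hz z (conj (conj I Hxz) Hd')). simpl in Hz. unfold R_dist in Hz.
  rewrite HFz, Rminus_0_l, Rabs_Ropp in Hz. lra.
Qed.

(** * psi36 approximates exp to order 6 *)

Lemma derive_n_exp_scaled (s : R) n t : Derive_n (fun u => exp (s * u)) n t = s ^ n * exp (s * t).
Proof.
  revert t. induction n as [|n IH]; intro t; simpl; [ring|].
  rewrite (Derive_ext _ (fun u => s ^ n * exp (s * u))) by (intro; apply IH).
  apply is_derive_unique. auto_derive; auto. ring.
Qed.

Lemma ex_derive_n_exp_scaled (s : R) k t : ex_derive_n (fun u => exp (s * u)) k t.
Proof.
  destruct k; simpl; auto.
  apply ex_derive_ext with (fun u => s ^ k * exp (s * u)).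
  { intro; symmetry; apply derive_n_exp_scaled. }
  auto_derive; auto.
Qed.

Definition T6 (z : R) : R := 1 + z + z^2/2 + z^3/6 + z^4/24 + z^5/120 + z^6/720.

(* Lagrange remainder, in the direction s = +-1 from 0. *)
Lemma exp_taylor_dir s y :
  (s = 1 \/ s = -1) -> 0 < y <= 1 -> Rabs (exp (s * y) - T6 (s * y)) <= 3 * y ^ 7 / 5040.
Proof.
  intros Hs Hy.
  destruct (Taylor_Lagrange (fun u => exp (s * u)) 6 0 y) as [zeta [Hz Ht]]; [lra| |].
  { intros; apply ex_derive_n_exp_scaled. }
  assert (Hfact : forall k, INR (Factorial.fact k) = IZR (Z.of_nat (Factorial.fact k)))
    by (intro; apply INR_IZR_INZ).
  cbn [sum_f_R0] in Ht. rewrite !derive_n_exp_scaled, !Hfact in Ht. simpl in Ht.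
  rewrite Rmult_0_r, exp_0, Rminus_0_r in Ht.
  assert (Hrem : exp (s * y) - T6 (s * y) = y ^ 7 / 5040 * (s ^ 7 * exp (s * zeta)))
    by (rewrite Ht; unfold T6; simpl; field).
  assert (Hs7 : Rabs (s ^ 7) = 1)
    by (rewrite <- RPow_abs; destruct Hs; subst; [rewrite Rabs_R1|rewrite Rabs_left by lra; replace (- -1) with 1 by ring];
        apply pow1).
  assert (He : exp (s * zeta) <= 3).
  { apply Rle_trans with (exp 1); [|apply exp_le_3].
    destruct (Req_dec (s * zeta) 1) as [->|]; [lra|].
    left. apply exp_increasing. destruct Hs; subst; lra. }
  rewrite Hrem, Rabs_mult, Rabs_mult, Hs7, (Rabs_pos_eq (exp _)) by (left; apply exp_pos).
  rewrite Rabs_pos_eq by (apply Rmult_le_pos; [apply pow_le; lra|lra]).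
  assert (0 <= y ^ 7 / 5040) by (apply Rmult_le_pos; [apply pow_le; lra|lra]). nra.
Qed.

Lemma exp_taylor z : Rabs z <= 1 -> Rabs (exp z - T6 z) <= 3 * Rabs z ^ 7 / 5040.
Proof.
  intro Hz. destruct (Rtotal_order z 0) as [Hn|[H0|Hp]].
  - rewrite (Rabs_left z) in * by lra. replace z with (-1 * - z) at 1 2 by ring.
    apply exp_taylor_dir; lra.
  - subst. replace (exp 0 - T6 0) with 0 by (unfold T6; rewrite exp_0; field).
    rewrite Rabs_R0, pow_i by lia. lra.
  - rewrite (Rabs_right z) in * by lra. replace z with (1 * z) at 1 2 by ring.
    apply exp_taylor_dir; lra.
Qed.

Lemma Q36_lower z : Rabs z < 1 -> 1/3 <= peval Q36 z.
Proof.
  intro Hz. unfold Q36; simpl. apply Rabs_def2 in Hz.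
  assert (0 <= z * z) by nra. assert (z * z < 1) by nra. assert (-1 < z * z * z < 1) by nra. nra.
Qed.

(* psi36 - exp = O(z^7): psi36 - T6 = z^7 K(z)/Q36(z) with K a small quadratic. *)
Lemma P36_approx z : Rabs z < 1 -> Rabs (peval P36 z / peval Q36 z - exp z) <= Rabs z ^ 7.
Proof.
  intro Hz. pose proof (Q36_lower z Hz) as HQ.
  set (K := 1/4800 - z/14400 + z*z/86400).
  assert (HK : Rabs K <= 1/3000).
  { unfold K. apply Rabs_def2 in Hz. apply Rabs_le.
    assert (0 <= z * z) by nra. assert (z * z < 1) by nra. split; nra. }
  assert (E : peval P36 z / peval Q36 z - exp z = z^7 * K / peval Q36 z - (exp z - T6 z)).
  { unfold K, T6, P36, Q36 in *. simpl in *. field. lra. }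
  rewrite E. eapply Rle_trans; [apply Rabs_triang|]. rewrite Rabs_Ropp.
  pose proof (exp_taylor z ltac:(lra)).
  rewrite Rabs_div, Rabs_mult, <- RPow_abs by lra.
  rewrite (Rabs_right (peval Q36 z)) by lra.
  assert (0 <= Rabs z ^ 7) by (apply pow_le, Rabs_pos).
  assert (Rabs z ^ 7 * Rabs K / peval Q36 z <= Rabs z ^ 7 / 1000).
  { apply Rmult_le_reg_r with (peval Q36 z); [lra|]. unfold Rdiv.
    rewrite Rmult_assoc, Rinv_l by lra. nra. }
  lra.
Qed.

Lemma inPi_P36 : in_Pi 3 3 6 P36 Q36.
Proof.
  unfold in_Pi, deg_le. repeat split; [simpl; lia|simpl; lia| |].
  - exists 0. unfold Q36; simpl. lra.
  - exists 1, 1. split; [lra|]. intros z Hz _. rewrite Rmult_1_l. apply P36_approx; auto.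
Qed.

(** * Uniqueness in Pi_{3/3,6} *)

(* If P/Q is also in Pi_{3/3,6}, then P Q36 - P36 Q has degree <= 6 and is O(z^7)
   along the non-roots of Q near 0, hence vanishes. *)
Lemma Pi_unique P Q :
  in_Pi 3 3 6 P Q -> forall x, peval P x * peval Q36 x = peval P36 x * peval Q x.
Proof.
  intros [HP [HQ [Hw [C [del [Hdel Hb]]]]]].
  set (H := padd (pmul P Q36) (pscale (-1) (pmul P36 Q))).
  assert (HH : forall z, peval H z = peval P z * peval Q36 z - peval P36 z * peval Q z).
  { intro z. unfold H. rewrite peval_padd, peval_pscale, !peval_pmul. ring. }
  assert (Hdeg : (length H <= 7)%nat).
  { apply (deg_le_padd _ _ 6); [|apply deg_le_pscale];
      apply (deg_le_pmul _ _ 3 3); auto; unfold deg_le, Q36, P36; simpl; lia. }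
  intro x. apply Rminus_diag_uniq. rewrite <- HH.
  apply (poly_small_zero (fun z => peval Q z <> 0) H 7 (sumabs Q * 2 * (C + 1)) (Rmin del 1));
    auto; [apply Rmin_glb_lt; lra| |].
  - intros z [Hz0 Hz1] HQz.
    pose proof (Rmin_l del 1). pose proof (Rmin_r del 1).
    assert (Haz : Rabs z < 1) by (rewrite Rabs_right; lra).
    pose proof (Q36_lower z Haz) as HQl.
    assert (E : peval H z = peval Q z * peval Q36 z *
              ((peval P z / peval Q z - exp z) - (peval P36 z / peval Q36 z - exp z))).
    { rewrite HH. field. split; lra. }
    pose proof (Hb z ltac:(rewrite Rabs_right; lra) HQz) as A1.
    pose proof (P36_approx z Haz) as A2.
    rewrite (Rabs_right z) in A1, A2 by lra.
    assert (A3 : Rabs (peval Q z) <= sumabs Q) by (apply peval_bound; lra).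
    assert (A4 : Rabs (peval Q36 z) <= 2)
      by (eapply Rle_trans; [apply peval_bound; lra|]; unfold Q36; simpl;
          repeat ((rewrite Rabs_pos_eq by lra) || (rewrite Rabs_left by lra)); lra).
    assert (Hd : Rabs ((peval P z / peval Q z - exp z) - (peval P36 z / peval Q36 z - exp z))
                 <= (C + 1) * z ^ 7).
    { unfold Rminus at 1. eapply Rle_trans; [apply Rabs_triang|]. rewrite Rabs_Ropp. lra. }
    rewrite E, !Rabs_mult.
    apply Rle_trans with (sumabs Q * 2 * ((C + 1) * z ^ 7)); [|right; ring].
    apply Rmult_le_compat; try apply Rabs_pos; auto.
    + apply Rmult_le_pos; apply Rabs_pos.
    + apply Rmult_le_compat; try apply Rabs_pos; auto.
  - intros eps Heps.
    destruct (poly_nonroot_near Q Hw 0 eps Heps) as [z [Hz Hzn]].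
    exists z. split; [lra|auto].
Qed.

(** * The radius of absolute monotonicity of psi36 *)

Lemma lowest_terms_P36 : lowest_terms P36 Q36 P36 Q36.
Proof.
  split; [|split].
  - exists [1/2; -3/25; 1/100], [1/2; 3/25; 1/100]. intro x. unfold P36, Q36. simpl. field.
  - exists 0. unfold Q36; simpl; lra.
  - intros; ring.
Qed.

Lemma abs_monotonic_P36 x : -r36 <= x <= 0 -> abs_monotonic_at P36 Q36 x.
Proof.
  intro Hx. pose proof rho_bounds.
  assert (Hrho : forall y, peval Q36 y <> 0 -> y <> rho)
    by (intros y Hy ->; apply Hy; rewrite Q36_factor; ring).
  exists P36, Q36. split; [apply lowest_terms_P36|]. split.
  { pose proof (Q36_pos_nonpos x ltac:(lra)). lra. }
  exists psi_deriv. split; [split|].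
  - intros y Hy. apply psi_deriv_0, Hrho, Hy.
  - intros k y Hy. apply is_derive_Reals, psi_deriv_derive, Hrho, Hy.
  - intro k. apply psi_deriv_nonneg; auto.
Qed.

Lemma deriv_seq_P36 P0 Q0 D :
  lowest_terms P36 Q36 P0 Q0 ->
  deriv_seq (fun y => peval P0 y / peval Q0 y) (fun y => peval Q0 y <> 0) D ->
  forall k z, z < 0 -> D k z = psi_deriv k z.
Proof.
  intros [[A [B Hcop]] [_ Hid]] [HD0 HDs].
  pose proof rho_bounds.
  assert (HQ0 : forall z, z < 0 -> peval Q0 z <> 0).
  { intros z Hz H0. pose proof (Hid z) as Hz1. rewrite H0, Rmult_0_r in Hz1.
    pose proof (Q36_pos_nonpos z ltac:(lra)).
    assert (HP0 : peval P0 z = 0) by (apply Rmult_integral in Hz1; destruct Hz1; [auto|lra]).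
    specialize (Hcop z). rewrite HP0, H0 in Hcop. lra. }
  intro k; induction k as [|k IH]; intros z Hz.
  - rewrite HD0 by (apply HQ0; auto). rewrite psi_deriv_0 by lra.
    pose proof (Hid z). pose proof (Q36_pos_nonpos z ltac:(lra)). pose proof (HQ0 z Hz).
    apply Rmult_eq_reg_r with (peval Q0 z * peval Q36 z); [|apply Rmult_integral_contrapositive; split; lra].
    field_simplify; lra.
  - assert (Hloc : locally z (fun y => D k y = psi_deriv k y)).
    { apply (filter_imp (fun y => y < 0)); [intros; apply IH; auto|]. apply open_lt; auto. }
    pose proof (is_derive_ext_loc _ _ z _ Hloc (proj2 (is_derive_Reals _ _ _) (HDs k z (HQ0 z Hz))))
      as H1.
    pose proof (psi_deriv_derive k z ltac:(lra)) as H2.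
    apply is_derive_unique in H1. apply is_derive_unique in H2. congruence.
Qed.

Lemma not_abs_monotonic_P36 x : x < - r36 -> ~ abs_monotonic_at P36 Q36 x.
Proof.
  pose proof r36_bounds.
  intros Hx [P0 [Q0 [Hlt [_ [D [HD Hpos]]]]]].
  destruct (psi_deriv_neg x Hx) as [k Hk].
  specialize (Hpos k). rewrite (deriv_seq_P36 P0 Q0 D Hlt HD) in Hpos by lra. lra.
Qed.

Lemma am_radius_P36 : am_radius P36 Q36 (Fin r36).
Proof.
  pose proof r36_bounds. split.
  - intros a [->|[r [-> [Hr Hall]]]]; simpl; [lra|].
    destruct (Rle_lt_dec r r36); auto. exfalso.
    apply (not_abs_monotonic_P36 (-(r + r36)/2)); [lra|]. apply Hall. lra.
  - intros b Hb. apply Hb. right. exists r36. repeat split; [lra|]. apply abs_monotonic_P36.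
Qed.

(** * Invariance under change of representation *)

Definition same_ratfun (P Q P' Q' : list R) : Prop :=
  (exists w, peval Q w <> 0) /\ (exists w, peval Q' w <> 0) /\
  forall x, peval P x * peval Q' x = peval P' x * peval Q x.

Lemma same_ratfun_sym P Q P' Q' : same_ratfun P Q P' Q' -> same_ratfun P' Q' P Q.
Proof.
  intros [HQ [HQ' Hx]]. split; [exact HQ'|split; [exact HQ|]].
  intro x. rewrite Hx. ring.
Qed.

Lemma cross_diff_continuous (P1 Q1 P2 Q2 : list R) x :
  continuity_pt (fun y => peval P1 y * peval Q1 y - peval P2 y * peval Q2 y) x.
Proof.
  apply (continuity_pt_minus (fun y => peval P1 y * peval Q1 y) (fun y => peval P2 y * peval Q2 y));
    apply (continuity_pt_mult (peval _) (peval _)); apply peval_continuous.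
Qed.

Lemma lowest_terms_transfer P Q P' Q' P0 Q0 :
  same_ratfun P Q P' Q' -> lowest_terms P Q P0 Q0 -> lowest_terms P' Q' P0 Q0.
Proof.
  intros [HQ [_ Hsame]] [Hc [Hn Hid]]. split; [|split]; auto.
  intro y. apply Rminus_diag_uniq.
  apply (continuous_cancel Q (fun y => peval P0 y * peval Q' y - peval P' y * peval Q0 y)); auto.
  - intro; apply cross_diff_continuous.
  - intro z. specialize (Hid z). specialize (Hsame z).
    replace ((peval P0 z * peval Q' z - peval P' z * peval Q0 z) * peval Q z)
      with (peval Q' z * (peval P0 z * peval Q z) - peval P' z * peval Q z * peval Q0 z) by ring.
    rewrite Hid, <- Hsame. ring.
Qed.

Lemma abs_monotonic_transfer P Q P' Q' x :
  same_ratfun P Q P' Q' -> abs_monotonic_at P Q x -> abs_monotonic_at P' Q' x.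
Proof.
  intros Hs [P0 [Q0 [Hl Hrest]]]. exists P0, Q0. split; auto.
  apply (lowest_terms_transfer P Q); auto.
Qed.

Lemma am_radius_transfer P Q P' Q' s :
  same_ratfun P Q P' Q' -> am_radius P Q s -> am_radius P' Q' s.
Proof.
  intros Hs [Hub Hleast].
  assert (Hset : forall P Q P' Q' a, same_ratfun P Q P' Q' ->
            am_radius_set P Q a -> am_radius_set P' Q' a).
  { intros P1 Q1 P2 Q2 a H12 [->|[r [-> [Hr Hall]]]]; [now left|right].
    exists r. repeat split; auto. intros x Hx. apply (abs_monotonic_transfer P1 Q1); auto. }
  split.
  - intros a Ha. apply Hub, (Hset P' Q'); auto. now apply same_ratfun_sym.
  - intros b Hb. apply Hleast. intros a Ha. apply Hb, (Hset P Q); auto.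
Qed.

Lemma Pi_same_ratfun P Q : in_Pi 3 3 6 P Q -> same_ratfun P Q P36 Q36.
Proof.
  intro HPi. split; [apply HPi|split].
  - exists 0. unfold Q36; simpl; lra.
  - apply Pi_unique, HPi.
Qed.

Lemma R_mnp_336 : R_mnp 3 3 6 (Fin r36).
Proof.
  split.
  - intros a [P [Q [HPi Ha]]].
    apply (am_radius_transfer P Q P36 Q36 a (Pi_same_ratfun P Q HPi)) in Ha.
    apply (proj2 Ha), am_radius_P36.
  - intros b Hb. apply Hb. exists P36, Q36. split; [apply inPi_P36|apply am_radius_P36].
Qed.

Theorem mainTheorem14 :
  in_Pi 3 3 6 P36 Q36 /\
  (forall P Q, in_Pi 3 3 6 P Q -> forall x, peval P x * peval Q36 x = peval P36 x * peval Q x) /\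
  am_radius P36 Q36 (Fin r36) /\
  r36 ^ 3 + 6 * r36 ^ 2 - 40 = 0 /\
  (forall y, y ^ 3 + 6 * y ^ 2 - 40 = 0 -> y = r36) /\
  R_mnp 3 3 6 (Fin r36).
Proof.
  split; [exact inPi_P36|].
  split; [exact Pi_unique|].
  split; [exact am_radius_P36|].
  split; [exact r36_cubic|].
  split; [|exact R_mnp_336].
  intros y Hy. exact (cubic_root_unique y r36 Hy r36_cubic).
Qed.
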